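(* Let $f: \mathbb{R}^n \to \mathbb{R}^n$ be topical. Then $$\inf \Lambda(f) = \inf_{x\in\mathbb{R}^n} \max_{1\le i\le n} (f_i(x) - x_i) = \overline{\chi}(f).$$
   Context: $f$ is topical if $f(x+h) = f(x)+h$ for all $h\in\mathbb{R}$ (scalar added to each coordinate) and $x\le y$ componentwise implies $f(x)\le f(y)$. $S^\lambda(f) = \{x : f(x) \le \lambda + x\}$ and $\Lambda(f) = \{\lambda\in\mathbb{R} : S^\lambda(f)\ne\emptyset\}$. The upper cycle time is $\overline{\chi}(f) = \lim_{k\to\infty} \max_i f^k_i(x)/k$, a limit that exists and is independent of $x \in \mathbb{R}^n$. *)

(* + MathComp-Analysis, over an abstract R : realType.
   Vectors of R^n (n >= 1) are functions 'I_n.+1 -> R. *)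
From HB Require Import structures.
From mathcomp Require Import all_boot all_order all_algebra.
From mathcomp Require Import all_classical all_reals all_analysis.
Set Implicit Arguments. Unset Strict Implicit. Unset Printing Implicit Defensive.
Import Order.TTheory GRing.Theory Num.Theory.
Local Open Scope classical_set_scope.
Local Open Scope ring_scope.

Section Defs.
Variables (R : realType) (n : nat).
Notation vec := ('I_n.+1 -> R).

Definition topical (f : vec -> vec) : Prop :=
  (forall (x : vec) (h : R), f (fun i => x i + h) = (fun i => f x i + h)) /\
  (forall x y : vec, (forall i, x i <= y i) -> forall i, f x i <= f y i).

Definition vmax (v : vec) : R := \big[Num.max/v ord0]_(i < n.+1) v i.

Definition Slambda (f : vec -> vec) (l : R) : set vec :=
  [set x | forall i, f x i <= l + x i].

Definition Lambda (f : vec -> vec) : set R := [set l | Slambda f l !=set0].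

End Defs.

From HB Require Import structures.
From mathcomp Require Import all_boot all_order all_algebra.
From mathcomp Require Import all_classical all_reals all_analysis.
From mathcomp Require Import ring lra.
Import Order.TTheory GRing.Theory Num.Theory numFieldTopology.Exports numFieldNormedType.Exports.
Local Open Scope classical_set_scope.
Local Open Scope ring_scope.

(* Let c be the infimum over x of max_i (f_i(x) - x_i); since S^l(f) is the set
   of points whose maximal increment is at most l, c = inf Lambda(f).
   If max_i (f_i(x) - x_i) <= c + e, homogeneity and monotonicity give
   f^k(y) <= f^k(x) + max (y - x) <= x + k (c + e) + max (y - x), so
   limsup max f^k(y) / k <= c. Conversely, if f^k(y) <= y + k mu, the
   componentwise minimum of f^j(y) - j mu over j < k lies in S^mu, so mu >= c
   and max f^k(y) >= k c + min y. *)

Lemma cvg_div_nat_linear_error (R : realType) (u : nat -> R) (c : R) :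
  (forall e, 0 < e -> exists A, forall k, `|u k - k%:R * c| <= A + k%:R * e) ->
  (fun k : nat => u k / k%:R) @ \oo --> c.
Proof.
move=> approx; apply/cvgrPdist_le => e e_gt0.
have [A u_approx] := approx (e / 2) ltac:(by rewrite divr_gt0).
pose B := `|A| * 2 / e.
have B_ge0 : 0 <= B by rewrite /B divr_ge0 ?mulr_ge0 // ltW.
have BE : B * e = `|A| * 2 by rewrite /B divfK ?gt_eqF.
near=> k.
have kB : B + 1 <= k%:R by near: k; apply: nbhs_infty_ger.
have k_gt0 : 0 < k%:R :> R by lra.
have kAe : `|A| * 2 <= k%:R * e by rewrite -BE; nra.
rewrite distrC.
have -> : u k / k%:R - c = (u k - k%:R * c) / k%:R by field; rewrite lt0r_neq0.
rewrite normrM normfV (gtr0_norm k_gt0) ler_pdivrMr //.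
have := u_approx k; have := ler_norm A; nra.
Unshelve. all: by end_near.
Qed.

Section Vmax.
Variables (R : realType) (n : nat).

Lemma le_vmax (v : 'I_n.+1 -> R) i : v i <= vmax v.
Proof. exact: le_bigmax. Qed.

Lemma vmax_le (v : 'I_n.+1 -> R) b : (forall i, v i <= b) -> vmax v <= b.
Proof. by move=> vb; apply: bigmax_le => // i _; apply: vb. Qed.

End Vmax.

Arguments le_vmax {R n}.
Arguments vmax_le {R n}.

Section Topical.
Variables (R : realType) (n : nat) (f : ('I_n.+1 -> R) -> ('I_n.+1 -> R)).
Hypothesis f_topical : topical f.
Local Notation vec := ('I_n.+1 -> R).

Definition max_increment (x : vec) : R := vmax (fun i => f x i - x i).

Lemma topical_le_shift {x y : vec} {h : R} :
  (forall i, x i <= y i + h) -> forall i, f x i <= f y i + h.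
Proof.
have [f_hom f_mono] := f_topical.
by move=> xy i; have := f_mono x (fun i => y i + h) xy i; rewrite f_hom.
Qed.

Lemma iter_topical_le_shift k {x y : vec} {h : R} :
  (forall i, x i <= y i + h) -> forall i, iter k f x i <= iter k f y i + h.
Proof.
by elim: k => [//|k IHk] xy /=; apply/topical_le_shift/IHk.
Qed.

Lemma SlambdaE mu x : Slambda f mu x <-> max_increment x <= mu.
Proof.
split=> [fx | mx i]; first by apply: vmax_le => i; have := fx i; lra.
by have := le_vmax (fun i => f x i - x i) i; rewrite -/(max_increment x) /=; lra.
Qed.

Lemma LambdaE mu : Lambda f mu <-> exists x, max_increment x <= mu.
Proof. by split=> -[x /SlambdaE mx]; exists x. Qed.

Lemma iter_le_of_Slambda {mu : R} {x : vec} :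
  Slambda f mu x -> forall k i, iter k f x i <= x i + k%:R * mu.
Proof.
move=> fx; elim=> [|k IHk] i /=; first by rewrite mul0r addr0.
have := topical_le_shift IHk i; have := fx i; rewrite -natr1; lra.
Qed.

Lemma Lambda_of_iter_le {N : nat} {z : vec} {mu : R} :
  (0 < N)%N -> (forall i, iter N f z i <= z i + N%:R * mu) -> Lambda f mu.
Proof.
move=> N_gt0 zN.
pose x i := \big[Num.min/z i]_(k < N) (iter k f z i - k%:R * mu).
have fx_le (k : 'I_N) i : f x i <= iter k.+1 f z i - k%:R * mu.
  rewrite iterS; apply: (@topical_le_shift _ _ (- (k%:R * mu))) => j.
  have : x j <= iter k f z j - k%:R * mu by apply: bigmin_le.
  lra.
have fx_le_z i : f x i - mu <= z i.
  have last_lt : (N.-1 < N)%N by rewrite prednK.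
  have := fx_le (Ordinal last_lt) i; rewrite [nat_of_ord _]/= prednK //.
  have := zN i; rewrite -[in N%:R](prednK N_gt0) -natr1; lra.
exists x => i; rewrite -lerBlDl; apply: le_bigmin => [|[[|k] kN] _] /=.
- exact: fx_le_z.
- by rewrite mul0r subr0 fx_le_z.
- have := fx_le (Ordinal (ltnW kN)) i; rewrite /= -natr1; lra.
Qed.

(* At an index j where x is minimal, x >= 0 + x_j gives f_j(x) >= f_j(0) + x_j. *)
Lemma max_increment_lbound :
  lbound (range max_increment) (- vmax (fun i => - f (fun _ => 0) i)).
Proof.
have [f_hom f_mono] := f_topical.
move=> _ [x _ <-].
have [j _ xj_min] := @arg_minP _ _ _ (ord0 : 'I_n.+1) xpredT x isT.
have f0_le : f (fun _ => 0) j + x j <= f x j.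
  rewrite -[_ + _]/((fun i => f (fun _ => 0) i + x j) j) -f_hom.
  by apply: f_mono => i; rewrite add0r; apply: xj_min.
have := le_vmax (fun i => f x i - x i) j.
have := le_vmax (fun i => - f (fun _ => 0) i) j => /=.
rewrite -/(max_increment x); lra.
Qed.

Definition cycle_time : R := inf (range max_increment).

Lemma has_inf_max_increment : has_inf (range max_increment).
Proof.
split; first by exists (max_increment (fun _ => 0)), (fun _ => 0).
by eexists; exact: max_increment_lbound.
Qed.

Lemma cycle_time_le x : cycle_time <= max_increment x.
Proof. by apply: (ge_inf has_inf_max_increment.2); exists x. Qed.

Lemma cycle_time_adherent {e : R} :
  0 < e -> exists x, max_increment x < cycle_time + e.
Proof.
by move=> e_gt0; have [_ [x _ <-] ?] := inf_adherent e_gt0 has_inf_max_increment; exists x.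
Qed.

Lemma Lambda_nonempty : Lambda f !=set0.
Proof. by exists (max_increment (fun _ => 0)); apply/LambdaE; exists (fun _ => 0). Qed.

Lemma cycle_time_lbound_Lambda : lbound (Lambda f) cycle_time.
Proof. by move=> l /LambdaE[x /(le_trans (cycle_time_le x))]. Qed.

Lemma inf_Lambda : inf (Lambda f) = cycle_time.
Proof.
apply/le_anti/andP; split; last first.
  exact: lb_le_inf Lambda_nonempty cycle_time_lbound_Lambda.
apply/ler_addgt0Pr => e /cycle_time_adherent[x /ltW gx_le].
apply: ge_inf; first by exists cycle_time; exact: cycle_time_lbound_Lambda.
by apply/LambdaE; exists x.
Qed.

Lemma vmax_iter_le x y k :
  vmax (iter k f y) <= vmax x + vmax (fun i => y i - x i) + k%:R * max_increment x.
Proof.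
apply: vmax_le => i.
have y_le j : y j <= x j + vmax (fun i => y i - x i).
  by have := le_vmax (fun i => y i - x i) j => /=; lra.
have := iter_topical_le_shift k y_le i.
have := iter_le_of_Slambda (proj2 (SlambdaE _ _) (lexx (max_increment x))) k i.
have := le_vmax x i; lra.
Qed.

Lemma cycle_time_le_iter_increment y k :
  k%:R * cycle_time <= vmax (fun i => iter k f y i - y i).
Proof.
have [->|k_gt0] := posnP k.
  by rewrite mul0r; have := le_vmax (fun i => iter 0 f y i - y i) ord0; rewrite /= subrr.
set V := vmax _.
have kR_gt0 : 0 < k%:R :> R by rewrite ltr0n.
have iter_le i : iter k f y i <= y i + k%:R * (V / k%:R).
  rewrite mulrC divfK ?lt0r_neq0 //.
  by have := le_vmax (fun i => iter k f y i - y i) i; rewrite -/V /=; lra.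
have := cycle_time_lbound_Lambda _ (Lambda_of_iter_le k_gt0 iter_le).
by rewrite ler_pdivlMr // mulrC.
Qed.

Lemma cvg_cycle_time y :
  (fun k : nat => vmax (iter k f y) / k%:R) @ \oo --> cycle_time.
Proof.
apply: cvg_div_nat_linear_error => e e_gt0.
have [x gx_lt] := cycle_time_adherent e_gt0.
exists (`|vmax x + vmax (fun i => y i - x i)| + `|vmax (fun i => - y i)|) => k.
have upper := vmax_iter_le x y k.
have lower : vmax (fun i => iter k f y i - y i) <= vmax (iter k f y) + vmax (fun i => - y i).
  apply: vmax_le => i.
  have := le_vmax (iter k f y) i; have := le_vmax (fun i => - y i) i => /=; lra.
have slope : k%:R * max_increment x <= k%:R * cycle_time + k%:R * e.
  by rewrite -mulrDr ler_wpM2l // ltW.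
have := cycle_time_le_iter_increment y k.
have ke_ge0 : 0 <= k%:R * e by rewrite mulr_ge0 // ltW.
have := ler_norm (vmax x + vmax (fun i => y i - x i)).
have := normr_ge0 (vmax x + vmax (fun i => y i - x i)).
have := ler_norm (vmax (fun i => - y i)).
have := normr_ge0 (vmax (fun i => - y i)).
move=> *; rewrite ler_norml; apply/andP; split; lra.
Qed.

End Topical.

Arguments max_increment {R n}.
Arguments cycle_time {R n}.
Arguments has_inf_max_increment {R n f}.

Theorem proposition2p3 (R : realType) (n : nat) (f : ('I_n.+1 -> R) -> ('I_n.+1 -> R)) :
  topical f ->
  exists chi : R,
    (forall x : 'I_n.+1 -> R,
        (fun k : nat => vmax (iter k f x) / (k%:R : R)) @ \oo --> chi) /\
    ereal_inf [set l%:E | l in Lambda f] = chi%:E /\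
    ereal_inf (range (fun x : 'I_n.+1 -> R => (vmax (fun i => f x i - x i))%:E))
      = chi%:E.
Proof.
move=> f_topical; exists (cycle_time f).
split; first exact: cvg_cycle_time.
have [range_n0 range_lb] := has_inf_max_increment f_topical.
split.
- rewrite ereal_inf_EFin ?inf_Lambda //; last exact: Lambda_nonempty.
  by exists (cycle_time f); exact: cycle_time_lbound_Lambda.
- rewrite -[X in ereal_inf X]/((EFin \o max_increment f) @` setT) -image_comp.
  by rewrite ereal_inf_EFin.
Qed.
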